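(* Let $k$ be a field, $R$ a commutative $k$-algebra, $M$ an $R$-module, $x$ an $n$-tuple in $R$, $R'=k[x]\subseteq R$, and let $y$ be an $m$-tuple in $R'$ with $\langle y\rangle=\langle x\rangle$ as ideals of $R'$. Let $q\in k[X_1,\ldots,X_n]$ be a polynomial with constant term $q(0)$, and let $z=(y,q(x))$, an $(m+1)$-tuple in $R$. If $b=(0,\lambda)\in\sigma(z,M)$ for some $\lambda\in k$ (with $0\in k^m$), then $0\in\sigma(y,M)$ and $\lambda=q(0)$. Moreover, for this $b$, $\dim_k H_p(z-b,M)=\dim_k H_{p-1}(y,M)+\dim_k H_p(y,M)$ for all $p$, and $i(z-b)=0$ whenever $i(y)<\infty$.
   Context: For a commutative $k$-algebra $R$, an $R$-module $M$ and an $n$-tuple $y=(y_1,\ldots,y_n)$ in $R$, the Koszul complex $\operatorname{Kos}(y,M)$ is $0\leftarrow M\leftarrow M\otimes_k\wedge^1k^n\leftarrow\cdots\leftarrow M\otimes_k\wedge^nk^n\leftarrow 0$ with differential $\partial(m\otimes e_{i_1}\wedge\cdots\wedge e_{i_p})=\sum_{s=1}^p(-1)^{s+1}y_{i_s}m\otimes e_{i_1}\wedge\cdots\wedge\widehat{e_{i_s}}\wedge\cdots\wedge e_{i_p}$; its homology groups are denoted $H_p(y,M)$; $H_{-1}:=0$. For $a\in k^n$, $y-a=(y_1-a_1,\ldots,y_n-a_n)$. The Taylor spectrum $\sigma(y,M)$ is the set of $a\in k^n$ such that $\operatorname{Kos}(y-a,M)$ is not exact. The index is $i(y)=\sum_{p=0}^n(-1)^{p+1}\dim_k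 H_p(y,M)$, defined (written $i(y)<\infty$) when all these dimensions are finite. *)

From HB Require Import structures.
From mathcomp Require Import all_boot all_order all_algebra.
From mathcomp Require Import mpoly.
Set Implicit Arguments. Unset Strict Implicit. Unset Printing Implicit Defensive.
Import Order.TTheory GRing.Theory Num.Theory.
Local Open Scope ring_scope.

(* A chain of Kos(y,M) in degree p (y an n-tuple) is
   represented as a function  c : {set 'I_n} -> M  vanishing outside the
   p-element subsets: c S is the coefficient of e_S = e_{i_1}/\.../\e_{i_p}
   (i_1 < ... < i_p the elements of S).  Degrees are integers; in negative
   degree the only chain is 0, so H_{-1} = 0 automatically. *)

Section Koszul.
Variables (k : fieldType) (R : comAlgType k) (M : lmodType R).

Definition kos_deg (n : nat) (p : int) (c : {set 'I_n} -> M) : Prop :=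
  forall S : {set 'I_n}, (#|S|%:Z != p) -> c S = 0.

(* The Koszul differential:
   d(m e_S) = sum_{s in S} (-1)^{#{t in S | t < s}} y_s m e_{S \ s},
   hence (d c)(T) = sum_{s notin T} (-1)^{#{t in T | t < s}} y_s c(T u {s}). *)
Definition kos_d (n : nat) (y : 'I_n -> R) (c : {set 'I_n} -> M)
    : {set 'I_n} -> M :=
  fun T => \sum_(s : 'I_n | s \notin T)
             ((-1) ^+ #|[set t in T | (t < s)%N]| * y s) *: c (s |: T).

Definition kos_cycle n (y : 'I_n -> R) (p : int) (c : {set 'I_n} -> M) :=
  kos_deg p c /\ kos_d y c = (fun _ => 0).

Definition kos_bdry n (y : 'I_n -> R) (p : int) (c : {set 'I_n} -> M) :=
  exists e : {set 'I_n} -> M, kos_deg (p + 1) e /\ c = kos_d y e.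

Definition kos_lincomb n d (a : 'I_d -> k) (v : 'I_d -> ({set 'I_n} -> M))
    : {set 'I_n} -> M :=
  fun S => \sum_(i < d) (a i)%:A *: v i S.

(* dim_k H_p(y,M) = d  (H_p = cycles / boundaries): there are d cycles whose
   classes form a k-basis of H_p. *)
Definition kos_hdim n (y : 'I_n -> R) (p : int) (d : nat) : Prop :=
  exists v : 'I_d -> ({set 'I_n} -> M),
    [/\ forall i, kos_cycle y p (v i),
        forall a : 'I_d -> k, kos_bdry y p (kos_lincomb a v) -> forall i, a i = 0
      & forall c, kos_cycle y p c ->
          exists a : 'I_d -> k,
            kos_bdry y p (fun S => c S - kos_lincomb a v S)].

Definition kos_exact n (y : 'I_n -> R) : Prop :=
  forall p c, kos_cycle y p c -> kos_bdry y p c.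

Definition kos_shift n (y : 'I_n -> R) (a : 'I_n -> k) : 'I_n -> R :=
  fun i => y i - (a i)%:A.

Definition in_taylor_spectrum n (y : 'I_n -> R) (a : 'I_n -> k) : Prop :=
  ~ kos_exact (kos_shift y a).

(* i(y) < oo and i(y) = i:  all H_p(y,M), 0 <= p <= n, are finite dimensional,
   and sum_{p=0}^n (-1)^{p+1} dim_k H_p(y,M) = i. *)
Definition kos_index_is n (y : 'I_n -> R) (i : int) : Prop :=
  exists e : nat -> nat,
    (forall p : nat, (p <= n)%N -> kos_hdim y p%:Z (e p)) /\
    i = \sum_(p < n.+1) (-1) ^+ p.+1 * (e p)%:Z.

End Koszul.

Definition snoc_tuple (T : Type) (m : nat) (y : 'I_m -> T) (t : T)
    : 'I_m.+1 -> T :=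
  fun i => if @insub nat (fun j => (j < m)%N) 'I_m (val i) is Some j then y j
           else t.

From HB Require Import structures.
From mathcomp Require Import all_boot all_order all_algebra.
From mathcomp Require Import mpoly ring.
From Stdlib Require Import Classical IndefiniteDescription FunctionalExtensionality.
Set Implicit Arguments. Unset Strict Implicit. Unset Printing Implicit Defensive.
Import Order.TTheory GRing.Theory Num.Theory.
Local Open Scope ring_scope.

(* Proposition 2.5.  Write q(x) = q(0) + sum_j cy_j y_j, possible since the
   x_i lie in the ideal <y> of k[x].  Then z - b = (y, 0) + (r + u) e_m with
   r = sum_j cy_j y_j in <y> and the scalar u = q(0) - lam.
   - Homotopy: d(e_j /\ c) + e_j /\ dc = y_j c, so H = sum_j cc_j (e_j /\ -)
     satisfies dH + Hd = sum_j cc_j y_j.  If this is a nonzero scalar the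
     Koszul complex is exact; applied to (y, r + u) this forces u = 0, i.e.
     lam = q(0), whenever b is in the spectrum.
   - Twisting: for r = cc.z and cc.e = 0, the map 1 + H d_e is a chain
     isomorphism Kos(z + r e) -> Kos(z); hence Kos(y, r) = Kos(y, 0).
   - Splitting: Kos((y,0),M) = Kos(y,M)[-1] (+) Kos(y,M), so
     dim H_p(z - b) = dim H_{p-1}(y) + dim H_p(y).
   Dimensions are handled abstractly as dimensions of subquotients Z / B of
   R-modules over k (well defined, additive on products, invariant under
   isomorphism).  Exactness of Kos(y) then transfers to Kos(z - b), and the
   alternating sum of the doubled dimensions telescopes to i(z - b) = 0. *)

Section KoszulSigns.
Variables (k : fieldType) (R : comAlgType k) (n : nat).
Implicit Types (T : {set 'I_n}) (s j : 'I_n).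

Definition kos_sign T s : R := (-1) ^+ #|[set t in T | (t < s)%N]|.

Definition lt_sign s j : R := if (s < j)%N then -1 else 1.

Lemma kos_signU1 T s j : s != j -> s \notin T ->
  kos_sign (s |: T) j = lt_sign s j * kos_sign T j.
Proof.
move=> sj sT; rewrite /kos_sign /lt_sign.
case: ifP => lt.
  have -> : [set t in s |: T | (t < j)%N] = s |: [set t in T | (t < j)%N].
    by apply/setP => t; rewrite !inE; case: eqP => [->|]; rewrite ?lt ?orbF.
  by rewrite cardsU1 inE (negbTE sT) /= exprS.
have -> : [set t in s |: T | (t < j)%N] = [set t in T | (t < j)%N].
  by apply/setP => t; rewrite !inE; case: eqP => [->|]; rewrite ?lt ?andbF.
by rewrite mul1r.
Qed.

Lemma kos_signD1 T j : kos_sign (T :\ j) j = kos_sign T j.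
Proof.
rewrite /kos_sign; congr (_ ^+ _); apply: eq_card => t; rewrite !inE.
by case: eqP => [->|]; rewrite ?ltnn ?andbF.
Qed.

Lemma kos_signU1_self T j : kos_sign (j |: T) j = kos_sign T j.
Proof.
rewrite /kos_sign; congr (_ ^+ _); apply: eq_card => t; rewrite !inE.
by case: eqP => [->|]; rewrite ?ltnn ?andbF.
Qed.

Lemma kos_sign_sqr T j : kos_sign T j * kos_sign T j = 1.
Proof. by rewrite /kos_sign -exprD addnn -signr_odd odd_double expr0. Qed.

Lemma lt_sign_sqr s j : lt_sign s j * lt_sign s j = 1.
Proof. by rewrite /lt_sign; case: ifP; rewrite ?mulN1r ?opprK ?mulr1. Qed.

Lemma lt_sign_anti s j : s != j -> lt_sign s j = - lt_sign j s.
Proof.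
move=> sj; rewrite /lt_sign; case: ltngtP => h; rewrite ?opprK //.
by move: sj; rewrite -(inj_eq val_inj) /= h eqxx.
Qed.

End KoszulSigns.
Arguments kos_sign {k R n}.
Arguments lt_sign {k R n}.
Arguments kos_signU1 {k R n T s j}.
Arguments kos_signD1 {k R n T j}.
Arguments kos_signU1_self {k R n T j}.
Arguments kos_sign_sqr {k R n T j}.
Arguments lt_sign_sqr {k R n s j}.
Arguments lt_sign_anti {k R n s j}.

Section KoszulDifferential.
Variables (k : fieldType) (R : comAlgType k) (M : lmodType R) (n : nat).
Implicit Types (T : {set 'I_n}) (c : {set 'I_n} -> M) (a b y : 'I_n -> R).

Lemma kos_dE y c T :
  kos_d y c T = \sum_(s | s \notin T) (kos_sign T s * y s) *: c (s |: T).
Proof. by []. Qed.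

Lemma kos_d_ext y c1 c2 T : c1 =1 c2 -> kos_d y c1 T = kos_d y c2 T.
Proof. by move=> e; rewrite !kos_dE; apply: eq_bigr => s _; rewrite e. Qed.

(* Exterior multiplication by e_j: e_j /\ (m e_S) = sign * m e_{S u j}. *)
Definition kos_wedge (j : 'I_n) c : {set 'I_n} -> M :=
  fun T => if j \in T then kos_sign T j *: c (T :\ j) else 0.

Lemma kos_wedge_ext j c1 c2 T : c1 =1 c2 -> kos_wedge j c1 T = kos_wedge j c2 T.
Proof. by move=> e; rewrite /kos_wedge e. Qed.

(* Cartan's homotopy formula  d (e_j /\ c) + e_j /\ d c = y_j c: multiplication
   by y_j is null-homotopic on Kos(y,M).  This is the engine of the proof. *)
Lemma kos_d_wedge y (j : 'I_n) c T :
  kos_d y (kos_wedge j c) T + kos_wedge j (kos_d y c) T = y j *: c T.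
Proof.
rewrite !kos_dE /kos_wedge; case: (boolP (j \in T)) => jT.
  rewrite kos_dE.
  have -> : \sum_(s | s \notin T :\ j)
        (kos_sign (T :\ j) s * y s) *: c (s |: T :\ j)
     = (kos_sign (T :\ j) j * y j) *: c (j |: T :\ j) +
       \sum_(s | s \notin T) (kos_sign (T :\ j) s * y s) *: c (s |: T :\ j).
    rewrite (bigD1 j) ?setD11 //=; congr (_ + _); apply: eq_bigl => s /=.
    by rewrite !inE negb_and negbK; case: (eqVneq s j) => [->|sj];
      rewrite ?jT /= ?andbT.
  rewrite kos_signD1 setD1K // scalerDr scalerA mulrA kos_sign_sqr mul1r addrCA.
  rewrite scaler_sumr -big_split /= big1 ?addr0 // => s sT.
  have sj : s != j by apply: contraNneq sT => ->.
  rewrite !inE jT orbT /=.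
  have signTs : kos_sign (T :\ j) s = lt_sign j s * kos_sign T s :> R.
    have := @kos_signU1 _ R _ (T :\ j) j s; rewrite setD1K // setD11 eq_sym.
    by move=> /(_ sj isT) ->; rewrite mulrA lt_sign_sqr mul1r.
  have -> : (s |: T) :\ j = s |: (T :\ j).
    by apply/setP => t; rewrite !inE; case: (eqVneq t s) => [->|ts];
      rewrite ?eqxx ?sj /=.
  rewrite (kos_signU1 sj sT) signTs (lt_sign_anti sj) !scalerA -scalerDl.
  have -> : kos_sign T s * y s * (- lt_sign j s * kos_sign T j) +
      kos_sign T j * (lt_sign j s * kos_sign T s * y s) = 0 by ring.
  by rewrite scale0r.
rewrite addr0 (bigD1 j) //= setU11 kos_signU1_self setU1K //.
rewrite scalerA mulrAC kos_sign_sqr mul1r big1 ?addr0 // => s /andP [sT sj].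
by rewrite !inE eq_sym (negbTE sj) (negbTE jT) scaler0.
Qed.

(* The term of d_a (d_b c) at T indexed by the removed pair (s, u). *)
Definition dd_term a b c T (s u : 'I_n) : M :=
  if [|| u == s, s \in T | u \in T] then 0 else
  (kos_sign T s * a s) *: ((kos_sign (s |: T) u * b u) *: c (u |: (s |: T))).

Lemma kos_dd_expand a b c T :
  kos_d a (kos_d b c) T = \sum_(s < n) \sum_(u < n) dd_term a b c T s u.
Proof.
rewrite kos_dE big_mkcond; apply: eq_bigr => s _ /=.
case: (boolP (s \in T)) => sT /=.
  by rewrite big1 // => u _; rewrite /dd_term sT orbT.
rewrite kos_dE scaler_sumr big_mkcond; apply: eq_bigr => u _ /=.
rewrite /dd_term (negbTE sT) !inE negb_or; case: (eqVneq u s) => [->|us] //=.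
by case: (u \in T).
Qed.

Lemma dd_term_anti a b c T s u : dd_term a b c T s u = - dd_term b a c T u s.
Proof.
rewrite /dd_term; case: (eqVneq s u) => [->|su] /=; first by rewrite oppr0.
case: (boolP (s \in T)) => sT /=; first by rewrite orbT oppr0.
case: (boolP (u \in T)) => uT /=; first by rewrite oppr0.
have us : u != s by rewrite eq_sym.
rewrite (kos_signU1 su sT) (kos_signU1 us uT) setUCA !scalerA -scaleNr.
by congr (_ *: _); rewrite (lt_sign_anti su); ring.
Qed.

Lemma dd_term_diag a b c T s : dd_term a b c T s s = 0.
Proof. by rewrite /dd_term eqxx. Qed.

Lemma sum_alternating0 (F : 'I_n -> 'I_n -> M) :
  (forall s, F s s = 0) -> (forall s u, F s u = - F u s) ->
  \sum_(s < n) \sum_(u < n) F s u = 0.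
Proof.
move=> F0 Fa.
pose upper (s u : 'I_n) := if (s < u)%N then F s u else 0.
pose lower (s u : 'I_n) := if (u < s)%N then F s u else 0.
have splitF s u : F s u = upper s u + lower s u.
  rewrite /upper /lower; case: ltngtP => h; rewrite ?addr0 ?add0r //.
  by rewrite (val_inj h) F0.
transitivity (\sum_(s < n) \sum_(u < n) upper s u +
              \sum_(s < n) \sum_(u < n) lower s u).
  rewrite -big_split; apply: eq_bigr => s _; rewrite -big_split.
  by apply: eq_bigr => u _; exact: splitF.
rewrite [X in _ + X]exchange_big /= -[X in _ + X]opprK -sumrN.
rewrite [X in _ - X](eq_bigr (fun s => \sum_(u < n) upper s u)) ?subrr //.
move=> s _; rewrite -sumrN; apply: eq_bigr => u _.
by rewrite /upper /lower; case: ifP; rewrite ?oppr0 // => _; rewrite Fa opprK.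
Qed.

Lemma kos_dd y c T : kos_d y (kos_d y c) T = 0.
Proof.
by rewrite kos_dd_expand sum_alternating0 // => [s|s u];
  [exact: dd_term_diag | exact: dd_term_anti].
Qed.

Lemma kos_dd_anticomm a b c T :
  kos_d a (kos_d b c) T + kos_d b (kos_d a c) T = 0.
Proof.
rewrite !kos_dd_expand -big_split /=.
under eq_bigr do rewrite -big_split /=.
apply: sum_alternating0 => [s|s u]; first by rewrite !dd_term_diag addr0.
by rewrite (dd_term_anti a b c T s u) (dd_term_anti b a c T s u) opprD addrC.
Qed.

End KoszulDifferential.

Section KoszulChains.
Variables (k : fieldType) (R : comAlgType k) (M : lmodType R) (n : nat).
(* The R-module of all chains of Kos(-, M) on n generators, all degrees. *)
Local Notation V := {ffun {set 'I_n} -> M}.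
Implicit Types (a b y cc : 'I_n -> R) (f g : V).

Definition kos_D y f : V := [ffun T => kos_d y f T].
Definition kos_E (j : 'I_n) f : V := [ffun T => kos_wedge j f T].
Definition kos_H cc f : V := \sum_(j < n) cc j *: kos_E j f.

Lemma kos_D_is_linear y : linear (kos_D y).
Proof.
move=> r f g; apply/ffunP => T; rewrite !ffunE !kos_dE scaler_sumr -big_split.
by apply: eq_bigr => s _; rewrite !ffunE scalerDr !scalerA mulrC.
Qed.
HB.instance Definition _ y :=
  GRing.isLinear.Build R V V *:%R (kos_D y) (kos_D_is_linear y).

Lemma kos_E_is_linear j : linear (kos_E j).
Proof.
move=> r f g; apply/ffunP => T; rewrite !ffunE /kos_wedge; case: ifP => _.
  by rewrite !ffunE scalerDr !scalerA mulrC.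
by rewrite scaler0 addr0.
Qed.
HB.instance Definition _ j :=
  GRing.isLinear.Build R V V *:%R (kos_E j) (kos_E_is_linear j).

Lemma kos_H_is_linear cc : linear (kos_H cc).
Proof.
move=> r f g; rewrite /kos_H scaler_sumr -big_split; apply: eq_bigr => j _ /=.
by rewrite linearP scalerDr !scalerA mulrC.
Qed.
HB.instance Definition _ cc :=
  GRing.isLinear.Build R V V *:%R (kos_H cc) (kos_H_is_linear cc).

Lemma kos_D_E y j f : kos_D y (kos_E j f) + kos_E j (kos_D y f) = y j *: f.
Proof.
apply/ffunP => T; rewrite !ffunE -(kos_d_wedge y j f T); congr (_ + _).
  by apply: kos_d_ext => S; rewrite ffunE.
by apply: kos_wedge_ext => S; rewrite ffunE.
Qed.

Lemma kos_D_H y cc f :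
  kos_D y (kos_H cc f) + kos_H cc (kos_D y f) = (\sum_(j < n) cc j * y j) *: f.
Proof.
rewrite /kos_H linear_sum -big_split scaler_suml; apply: eq_bigr => j _ /=.
by rewrite linearZ /= -scalerDr kos_D_E scalerA.
Qed.

Lemma kos_DD y f : kos_D y (kos_D y f) = 0.
Proof.
apply/ffunP => T; rewrite !ffunE -(kos_dd y f T); apply: kos_d_ext => S.
by rewrite ffunE.
Qed.

Lemma kos_DD_anticomm a b f : kos_D a (kos_D b f) = - kos_D b (kos_D a f).
Proof.
apply/eqP; rewrite -addr_eq0; apply/eqP/ffunP => T; rewrite !ffunE.
rewrite -(kos_dd_anticomm a b f T).
by congr (_ + _); apply: kos_d_ext => S; rewrite ffunE.
Qed.

Lemma kos_D_tupleD a b f : kos_D (fun i => a i + b i) f = kos_D a f + kos_D b f.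
Proof.
apply/ffunP => T; rewrite !ffunE !kos_dE -big_split; apply: eq_bigr => s _.
by rewrite mulrDr scalerDl.
Qed.

Lemma kos_D_tupleZ (r : R) a f : kos_D (fun i => r * a i) f = r *: kos_D a f.
Proof.
apply/ffunP => T; rewrite !ffunE !kos_dE scaler_sumr; apply: eq_bigr => s _.
by rewrite scalerA mulrCA.
Qed.

Lemma kos_deg0 (p : int) : kos_deg p (0 : V).
Proof. by move=> S _; rewrite ffunE. Qed.

Lemma kos_degP (p : int) (r : R) f g :
  kos_deg p f -> kos_deg p g -> kos_deg p (r *: f + g).
Proof. by move=> df dg S hS; rewrite !ffunE df // dg // scaler0 addr0. Qed.

Lemma kos_deg_D y (p : int) f : kos_deg p f -> kos_deg (p - 1) (kos_D y f).
Proof.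
move=> df S hS; rewrite ffunE kos_dE big1 // => s sS; rewrite df ?scaler0 //.
rewrite cardsU1 sS /=; apply: contra hS => /eqP <-.
by rewrite PoszD; apply/eqP; ring.
Qed.

Lemma kos_deg_E j (p : int) f : kos_deg p f -> kos_deg (p + 1) (kos_E j f).
Proof.
move=> df S hS; rewrite ffunE /kos_wedge; case: ifP => // jS.
rewrite df ?scaler0 //; move: hS; rewrite (cardsD1 j S) jS /=.
by apply: contra => /eqP <-; rewrite PoszD; apply/eqP; ring.
Qed.

Lemma kos_deg_H cc (p : int) f : kos_deg p f -> kos_deg (p + 1) (kos_H cc f).
Proof.
move=> df S hS; rewrite sum_ffunE big1 // => j _.
by rewrite ffunE (kos_deg_E j df hS) scaler0.
Qed.

End KoszulChains.

Section SubquotientDimension.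
Variables (k : fieldType) (R : comAlgType k) (V : lmodType R).
Implicit Types (P Z B : V -> Prop).

Definition klc d (a : 'I_d -> k) (v : 'I_d -> V) : V :=
  \sum_(i < d) (a i)%:A *: v i.

Definition ksubspace P := P 0 /\ forall (a : k) u w, P u -> P w -> P (a%:A *: u + w).

(* dim_k (Z / B) = d, for k-subspaces B <= Z: d elements of Z whose classes
   form a basis of the quotient.  kos_hdim is the case Z = cycles,
   B = boundaries. *)
Definition subquot_dim Z B d := exists v : 'I_d -> V,
  [/\ forall i, Z (v i),
      forall a, B (klc a v) -> forall i, a i = 0
    & forall c, Z c -> exists a, B (c - klc a v)].

Lemma in_algD (a b : k) : (a + b)%:A = a%:A + b%:A :> R.
Proof. by rewrite scalerDl. Qed.

Lemma in_algM (a b : k) : (a * b)%:A = a%:A * b%:A :> R.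
Proof. by rewrite mulr_algl scalerA. Qed.

Section Subspace.
Variable P : V -> Prop.
Hypothesis subP : ksubspace P.

Lemma ksubspace0 : P 0. Proof. by case: subP. Qed.

Lemma ksubspaceD u w : P u -> P w -> P (u + w).
Proof. by move=> pu pw; have := subP.2 1 u w pu pw; rewrite scale1r scale1r. Qed.

Lemma ksubspaceZ a u : P u -> P (a%:A *: u).
Proof. by move=> pu; have := subP.2 a u 0 pu ksubspace0; rewrite addr0. Qed.

Lemma ksubspace_sum (I : finType) (F : I -> V) :
  (forall i, P (F i)) -> P (\sum_i F i).
Proof. by move=> PF; apply: (big_ind P ksubspace0 ksubspaceD) => i _. Qed.

End Subspace.

Lemma klcD d (a b : 'I_d -> k) v : klc (fun i => a i + b i) v = klc a v + klc b v.
Proof. by rewrite /klc -big_split; apply: eq_bigr => i _; rewrite in_algD scalerDl. Qed.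

Lemma klcN d (a : 'I_d -> k) v : klc (fun i => - a i) v = - klc a v.
Proof. by rewrite /klc -sumrN; apply: eq_bigr => i _; rewrite scaleNr scaleNr. Qed.

Lemma klcZ d (c : k) (a : 'I_d -> k) v :
  klc (fun i => c * a i) v = c%:A *: klc a v.
Proof. by rewrite /klc scaler_sumr; apply: eq_bigr => i _; rewrite in_algM scalerA. Qed.

Lemma klc0 d (v : 'I_d -> V) : klc (fun _ => 0) v = 0.
Proof. by rewrite /klc big1 // => i _; rewrite !scale0r. Qed.

Lemma klc_ext d (a b : 'I_d -> k) v : a =1 b -> klc a v = klc b v.
Proof. by move=> e; rewrite /klc; apply: eq_bigr => i _; rewrite e. Qed.

Lemma klc_klc d d' (a : 'I_d' -> k) (A : 'I_d' -> 'I_d -> k) (v : 'I_d -> V) :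
  \sum_i (a i)%:A *: klc (A i) v = klc (fun j => \sum_i a i * A i j) v.
Proof.
rewrite /klc; under eq_bigr do rewrite scaler_sumr.
rewrite exchange_big /=; apply: eq_bigr => j _.
rewrite scaler_suml scaler_suml; apply: eq_bigr => i _.
by rewrite in_algM scalerA.
Qed.

(* Steinitz: if d vectors span Z modulo B, a family of Z that is independent
   modulo B has at most d members.  (Write each w_i modulo B in terms of v;
   the coefficient matrix is row-free, so its rank d' is at most d.) *)
Lemma independent_size_le Z B d d' (v : 'I_d -> V) (w : 'I_d' -> V) :
  ksubspace B -> (forall i, Z (w i)) ->
  (forall c, Z c -> exists a, B (c - klc a v)) ->
  (forall a, B (klc a w) -> forall i, a i = 0) -> (d' <= d)%N.
Proof.
move=> subB Zw span indep.
have [A hA] := functional_choice _ (fun i => span (w i) (Zw i)).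
pose Am : 'M[k]_(d', d) := \matrix_(i, j) A i j.
suff /eqP <- : row_free Am by exact: rank_leq_col.
apply: inj_row_free => x hx; apply/rowP => i; rewrite mxE.
apply: indep i; have -> : klc (fun i => x 0 i) w =
    \sum_i (x 0 i)%:A *: (w i - klc (A i) v) + \sum_i (x 0 i)%:A *: klc (A i) v.
  by rewrite -big_split /klc; apply: eq_bigr => i _ /=; rewrite -scalerDr subrK.
have -> : \sum_i (x 0 i)%:A *: klc (A i) v = 0.
  rewrite klc_klc -(klc0 v); apply: klc_ext => j.
  have := congr1 (fun N : 'M[k]_(1, d) => N 0 j) hx; rewrite !mxE => sum0.
  by rewrite -[RHS]sum0; apply: eq_bigr => i _; rewrite mxE.
by rewrite addr0; apply: ksubspace_sum => // i; apply: ksubspaceZ.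
Qed.

Lemma subquot_dim_uniq Z B d d' :
  ksubspace B -> subquot_dim Z B d -> subquot_dim Z B d' -> d = d'.
Proof.
move=> subB [v [Zv iv sv]] [w [Zw iw sw]]; apply/eqP; rewrite eqn_leq.
by rewrite (independent_size_le subB Zv sw iv) (independent_size_le subB Zw sv iw).
Qed.

(* A finite family of Z spanning Z modulo B contains a basis of Z / B:
   drop a vector involved in a dependence relation until none is left. *)
Lemma subquot_dim_exists Z B : ksubspace B -> forall d (w : 'I_d -> V),
  (forall i, Z (w i)) -> (forall c, Z c -> exists a, B (c - klc a w)) ->
  exists d', subquot_dim Z B d'.
Proof.
move=> subB; elim=> [|d IH] w Zw span; first by exists 0%N, w; split=> // a _ [].
case: (classic (forall a, B (klc a w) -> forall i, a i = 0)) => [indep|dep].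
  by exists d.+1, w.
have [a dep_a] := not_all_ex_not _ _ dep.
have [Ba /not_all_ex_not [j /eqP aj]] := imply_to_and _ _ dep_a.
apply: (IH (fun i : 'I_d => w (lift j i))) => [i|c Zc]; first exact: Zw.
have [b Hb] := span c Zc; pose t := b j / a j.
exists (fun i => b (lift j i) + - (t * a (lift j i))).
have klc_lift (e : 'I_d.+1 -> k) :
    klc e w = (e j)%:A *: w j + klc (fun i => e (lift j i)) (fun i => w (lift j i)).
  by rewrite /klc (bigD1_ord j).
have -> : c - klc (fun i => b (lift j i) + - (t * a (lift j i))) (fun i => w (lift j i))
    = (c - klc b w) + t%:A *: klc a w.
  rewrite klcD klcN klcZ !klc_lift scalerDr scalerA -in_algM /t divfK //.
  by rewrite opprB -addrA opprD addrACA addNr add0r [X in c + X]addrC.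
by apply: ksubspaceD => //; apply: ksubspaceZ.
Qed.

End SubquotientDimension.

Section SubquotientIsomorphism.
Variables (k : fieldType) (R : comAlgType k) (V V' : lmodType R).

Lemma subquot_dim_iso (Z B : V -> Prop) (Z' B' : V' -> Prop)
    (f : {linear V -> V'}) (g : V' -> V) d :
  (forall u, Z u -> Z' (f u)) -> (forall u, B u -> B' (f u)) ->
  (forall u, Z' u -> Z (g u)) -> (forall u, B' u -> B (g u)) ->
  cancel f g -> cancel g f ->
  subquot_dim Z B d -> subquot_dim Z' B' d.
Proof.
move=> fZ fB gZ gB gf fg [v [Zv iv sv]].
have f_klc a : f (klc a v) = klc a (fun i => f (v i)).
  by rewrite /klc linear_sum; apply: eq_bigr => i _; rewrite linearZ.
exists (fun i => f (v i)); split.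
- by move=> i; apply: fZ.
- by move=> a Ba; apply: iv; have := gB _ Ba; rewrite -f_klc gf.
move=> c Zc; have [a Ba] := sv _ (gZ _ Zc); exists a.
by have := fB _ Ba; rewrite linearB fg f_klc.
Qed.

End SubquotientIsomorphism.

Section SubquotientProduct.
Variables (k : fieldType) (R : comAlgType k) (V1 V2 : lmodType R).
Variables (Z1 B1 : V1 -> Prop) (Z2 B2 : V2 -> Prop).

Definition prod_pred (P1 : V1 -> Prop) (P2 : V2 -> Prop) (u : V1 * V2) :=
  P1 u.1 /\ P2 u.2.

Lemma klc_fst d (a : 'I_d -> k) (w : 'I_d -> V1 * V2) :
  (klc a w).1 = klc a (fun i => (w i).1).
Proof. exact: (big_morph fst (fun _ _ => erefl) erefl). Qed.

Lemma klc_snd d (a : 'I_d -> k) (w : 'I_d -> V1 * V2) :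
  (klc a w).2 = klc a (fun i => (w i).2).
Proof. exact: (big_morph snd (fun _ _ => erefl) erefl). Qed.

Definition concat_family d1 d2 (v1 : 'I_d1 -> V1) (v2 : 'I_d2 -> V2)
    (i : 'I_(d1 + d2)) : V1 * V2 :=
  match split i with inl j => (v1 j, 0) | inr j => (0, v2 j) end.

Lemma klc_concat d1 d2 (a : 'I_(d1 + d2) -> k) v1 v2 :
  klc a (concat_family v1 v2) =
  (klc (fun j => a (lshift d2 j)) v1, klc (fun j => a (rshift d1 j)) v2).
Proof.
have splitL (j : 'I_d1) : split (lshift d2 j) = inl j by exact: (unsplitK (inl _ j)).
have splitR (j : 'I_d2) : split (rshift d1 j) = inr j by exact: (unsplitK (inr _ j)).
rewrite [LHS]surjective_pairing klc_fst klc_snd /klc !big_split_ord /=.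
congr pair.
  rewrite [X in _ + X]big1 ?addr0 => [|j _]; last by rewrite /concat_family splitR /= scaler0.
  by apply: eq_bigr => j _; rewrite /concat_family splitL.
rewrite big1 ?add0r => [|j _]; last by rewrite /concat_family splitL /= scaler0.
by apply: eq_bigr => j _; rewrite /concat_family splitR.
Qed.

Lemma prod_subspace : ksubspace B1 -> ksubspace B2 -> ksubspace (prod_pred B1 B2).
Proof.
move=> s1 s2; split; first by split; [exact: ksubspace0 s1 | exact: ksubspace0 s2].
by move=> a u w [? ?] [? ?]; split; [apply: s1.2 | apply: s2.2].
Qed.

Lemma subquot_dim_prod d1 d2 : ksubspace Z1 -> ksubspace Z2 ->
  subquot_dim Z1 B1 d1 -> subquot_dim Z2 B2 d2 ->
  subquot_dim (prod_pred Z1 Z2) (prod_pred B1 B2) (d1 + d2).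
Proof.
move=> sZ1 sZ2 [v1 [Zv1 iv1 sv1]] [v2 [Zv2 iv2 sv2]].
exists (concat_family v1 v2); split.
- move=> i; rewrite /concat_family; case: (split i) => j; split => //=.
    exact: ksubspace0 sZ2.
  exact: ksubspace0 sZ1.
- move=> a; rewrite klc_concat => -[/= B1a B2a] i.
  by rewrite -(splitK i); case: (split i) => j /=; [exact: iv1 B1a j | exact: iv2 B2a j].
move=> c [Zc1 Zc2]; have [a1 Ha1] := sv1 _ Zc1; have [a2 Ha2] := sv2 _ Zc2.
exists (fun i => match split i with inl j => a1 j | inr j => a2 j end).
rewrite klc_concat (@klc_ext _ _ _ _ _ a1) => [|j]; last by rewrite (unsplitK (inl _ j)).
by rewrite (@klc_ext _ _ _ _ _ a2) => [|j]; last by rewrite (unsplitK (inr _ j)).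
Qed.

Lemma subquot_dim_prod_inv d : ksubspace Z1 -> ksubspace Z2 ->
  ksubspace B1 -> ksubspace B2 ->
  subquot_dim (prod_pred Z1 Z2) (prod_pred B1 B2) d -> exists d1 d2,
    [/\ subquot_dim Z1 B1 d1, subquot_dim Z2 B2 d2 & d = (d1 + d2)%N].
Proof.
move=> sZ1 sZ2 sB1 sB2 hd; have [w [Zw _ sw]] := hd.
have [d1 h1] : exists d1, subquot_dim Z1 B1 d1.
  apply: (subquot_dim_exists sB1 (w := fun i => (w i).1)) => [i|c Zc].
    by case: (Zw i).
  have [a [Ba _]] := sw (c, 0) (conj Zc (ksubspace0 sZ2)).
  by exists a; move: Ba; rewrite /= klc_fst.
have [d2 h2] : exists d2, subquot_dim Z2 B2 d2.
  apply: (subquot_dim_exists sB2 (w := fun i => (w i).2)) => [i|c Zc].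
    by case: (Zw i).
  have [a [_ Ba]] := sw (0, c) (conj (ksubspace0 sZ1) Zc).
  by exists a; move: Ba; rewrite /= klc_snd.
exists d1, d2; split => //.
exact: (subquot_dim_uniq (prod_subspace sB1 sB2) hd (subquot_dim_prod sZ1 sZ2 h1 h2)).
Qed.

End SubquotientProduct.

Section KoszulHomology.
Variables (k : fieldType) (R : comAlgType k) (M : lmodType R) (n : nat).
Local Notation V := {ffun {set 'I_n} -> M}.
Implicit Types (y : 'I_n -> R) (f : V) (c : {set 'I_n} -> M).

Definition cycles y (p : int) f := kos_deg p f /\ kos_D y f = 0.
Definition boundaries y (p : int) f :=
  exists e : V, kos_deg (p + 1) e /\ f = kos_D y e.

Lemma cycles_subspace y p : ksubspace (cycles y p).
Proof.
split; first by split; [exact: kos_deg0 | rewrite linear0].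
move=> a u w [du Du] [dw Dw]; split; first exact: kos_degP.
by rewrite linearP /= Du Dw scaler0 addr0.
Qed.

Lemma boundaries_subspace y p : ksubspace (boundaries y p).
Proof.
split; first by exists 0; split; [exact: kos_deg0 | rewrite linear0].
move=> a u w [eu [du ->]] [ew [dw ->]]; exists (a%:A *: eu + ew).
by split; [exact: kos_degP | rewrite linearP].
Qed.

Definition chain_of c : V := [ffun S => c S].

Lemma chain_of_inj : injective chain_of.
Proof.
move=> c1 c2 e; apply: functional_extensionality => S.
by have := congr1 (fun f : V => f S) e; rewrite !ffunE.
Qed.

Lemma chain_ofK f : chain_of (fun S => f S) = f.
Proof. by apply/ffunP => S; rewrite ffunE. Qed.

Lemma kos_D_chain_of y c : kos_D y (chain_of c) = chain_of (kos_d y c).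
Proof. by apply/ffunP => T; rewrite !ffunE; apply: kos_d_ext => S; rewrite ffunE. Qed.

Lemma kos_deg_chain_of (p : int) c : kos_deg p c <-> kos_deg p (chain_of c).
Proof. by split=> h S hS; have := h S hS; rewrite ffunE. Qed.

Lemma kos_cycleE y p c : kos_cycle y p c <-> cycles y p (chain_of c).
Proof.
rewrite /kos_cycle /cycles kos_deg_chain_of kos_D_chain_of.
have -> : (0 : V) = chain_of (fun _ => 0) by apply/ffunP => S; rewrite !ffunE.
by split=> -[dc Dc]; split=> //; [rewrite Dc | exact: chain_of_inj].
Qed.

Lemma kos_bdryE y p c : kos_bdry y p c <-> boundaries y p (chain_of c).
Proof.
split=> -[e [de ce]].
  by exists (chain_of e); rewrite -kos_deg_chain_of kos_D_chain_of ce.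
exists (fun S => e S); split; first by move=> S hS; exact: de.
by apply: chain_of_inj; rewrite -kos_D_chain_of chain_ofK.
Qed.

Lemma chain_of_lincomb d (a : 'I_d -> k) (v : 'I_d -> {set 'I_n} -> M) :
  chain_of (kos_lincomb a v) = klc a (fun i => chain_of (v i)).
Proof.
apply/ffunP => S; rewrite /klc sum_ffunE ffunE /kos_lincomb.
by apply: eq_bigr => i _; rewrite !ffunE.
Qed.

Lemma chain_ofB c1 c2 : chain_of (fun S => c1 S - c2 S) = chain_of c1 - chain_of c2.
Proof. by apply/ffunP => S; rewrite !ffunE. Qed.

Lemma kos_hdimE y p d :
  kos_hdim M y p d <-> subquot_dim (cycles y p) (boundaries y p) d.
Proof.
split=> -[v [Zv iv sv]].
  exists (fun i => chain_of (v i)); split.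
  - by move=> i; rewrite -kos_cycleE.
  - by move=> a; rewrite -chain_of_lincomb -kos_bdryE; apply: iv.
  move=> c; rewrite -(chain_ofK c) -kos_cycleE => /sv [a Ha]; exists a.
  by rewrite -chain_of_lincomb -chain_ofB -kos_bdryE.
have ev : (fun i => chain_of (fun S => v i S)) = v.
  by apply: functional_extensionality => i; exact: chain_ofK.
exists (fun i S => v i S); split.
- by move=> i; rewrite kos_cycleE chain_ofK.
- by move=> a; rewrite kos_bdryE chain_of_lincomb ev; apply: iv.
move=> c; rewrite kos_cycleE => /sv [a Ha]; exists a.
by rewrite kos_bdryE chain_ofB chain_of_lincomb ev.
Qed.

Lemma kos_hdim0 y (p : int) :
  kos_hdim M y p 0 <-> forall c, kos_cycle y p c -> kos_bdry y p c.
Proof.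
have lincomb0 (a : 'I_0 -> k) (v : 'I_0 -> {set 'I_n} -> M) c :
    (fun S => c S - kos_lincomb a v S) = c.
  by apply: functional_extensionality => S; rewrite /kos_lincomb big_ord0 subr0.
split=> [[v [_ _ span]] c /span [a]|exact_p]; first by rewrite lincomb0.
exists (fun (i : 'I_0) S => 0); split=> [[]|a _ []|c /exact_p bc] //.
by exists (fun _ => 0); rewrite lincomb0.
Qed.


Lemma kos_hdim_out_of_range y (p : int) :
  (forall S : {set 'I_n}, #|S|%:Z != p) -> kos_hdim M y p 0.
Proof.
move=> noS; apply/kos_hdim0 => c [dc _]; exists (fun _ => 0); split=> [S _ //|].
apply: functional_extensionality => S; rewrite dc // kos_dE big1 // => s _.
by rewrite scaler0.
Qed.

(* If sum_i cc_i y_i is a nonzero scalar u, then Kos(y,M) is exact: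
   (1/u) H_cc is a contracting homotopy. *)
Lemma kos_exact_unit y cc (u : k) :
  u != 0 -> \sum_i cc i * y i = u%:A -> kos_exact M y.
Proof.
move=> u0 hu p c /kos_cycleE [dc Dc]; apply/kos_bdryE.
exists ((u^-1)%:A *: kos_H cc (chain_of c)); split.
  by move=> S hS; rewrite ffunE (kos_deg_H cc dc hS) scaler0.
have := kos_D_H y cc (chain_of c); rewrite Dc raddf0 addr0 hu => DH.
by rewrite linearZ /= DH scalerA -in_algM mulVf // scale1r scale1r.
Qed.

End KoszulHomology.
Arguments kos_hdimE {k R M n}.
Arguments kos_hdim0 {k R M n}.
Arguments kos_hdim_out_of_range {k R M n}.

Section Twisting.
Variables (k : fieldType) (R : comAlgType k) (M : lmodType R) (n : nat).
Local Notation V := {ffun {set 'I_n} -> M}.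
(* z' = z + r e, where r = sum_j cc_j z_j and the direction e is killed by
   cc.  Then Kos(z') and Kos(z) are isomorphic complexes. *)
Variables (z e cc : 'I_n -> R) (r : R).
Hypothesis sum_cc_z : \sum_j cc j * z j = r.
Hypothesis sum_cc_e : \sum_j cc j * e j = 0.
Local Notation z' := (fun i => z i + r * e i).
Local Notation Dz := (kos_D (M := M) z).
Local Notation De := (kos_D (M := M) e).
Local Notation H := (kos_H (M := M) cc).
Implicit Types (f : V).

Lemma kos_Dz_H f : Dz (H f) = r *: f - H (Dz f).
Proof. by rewrite -sum_cc_z -(kos_D_H z cc f) addrK. Qed.

Lemma kos_De_H f : De (H f) = - H (De f).
Proof. by apply/eqP; rewrite -addr_eq0 kos_D_H sum_cc_e scale0r. Qed.

Lemma kos_De_H_De f : De (H (De f)) = 0.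
Proof. by rewrite kos_De_H kos_DD linear0 oppr0. Qed.

Definition twist f : V := f + H (De f).
Definition untwist f : V := f - H (De f).

Lemma twist_is_linear : linear twist.
Proof. by move=> a f g; rewrite /twist !linearP /= scalerDr addrACA. Qed.
HB.instance Definition _ := GRing.isLinear.Build R V V *:%R twist twist_is_linear.

Lemma untwist_is_linear : linear untwist.
Proof. by move=> a f g; rewrite /untwist !linearP /= scalerDr scalerN addrACA. Qed.
HB.instance Definition _ := GRing.isLinear.Build R V V *:%R untwist untwist_is_linear.

Lemma twistK : cancel twist untwist.
Proof. by move=> f; rewrite /untwist /twist linearD /= kos_De_H_De addr0 addrK. Qed.

Lemma untwistK : cancel untwist twist.
Proof. by move=> f; rewrite /untwist /twist linearB /= kos_De_H_De subr0 subrK. Qed.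

Lemma twist_chain f : Dz (twist f) = twist (kos_D z' f).
Proof.
rewrite /twist kos_D_tupleD kos_D_tupleZ linearD /= kos_Dz_H (kos_DD_anticomm z e).
by rewrite !linearN /= opprK linearD /= linearZ /= kos_DD scaler0 addr0 addrA.
Qed.

Lemma untwist_chain f : kos_D z' (untwist f) = untwist (Dz f).
Proof.
rewrite /untwist !kos_D_tupleD !kos_D_tupleZ !linearB /= kos_Dz_H.
rewrite (kos_DD_anticomm z e) linearN /= opprK kos_De_H_De scaler0 subr0.
by rewrite opprD addrA addrAC subrK.
Qed.

Lemma kos_deg_twist (p : int) f : kos_deg p f -> kos_deg p (twist f).
Proof.
move=> df; have := kos_deg_H cc (kos_deg_D e df); rewrite subrK => dh.
by have := kos_degP 1 df dh; rewrite scale1r.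
Qed.

Lemma kos_deg_untwist (p : int) f : kos_deg p f -> kos_deg p (untwist f).
Proof.
move=> df; have := kos_deg_H cc (kos_deg_D e df); rewrite subrK => dh.
by have := kos_degP (-1) dh df; rewrite scaleN1r addrC.
Qed.

Lemma twist_cycles p f : cycles z' p f -> cycles z p (twist f).
Proof.
move=> [df Df]; split; first exact: kos_deg_twist.
by rewrite twist_chain Df linear0.
Qed.

Lemma untwist_cycles p f : cycles z p f -> cycles z' p (untwist f).
Proof.
move=> [df Df]; split; first exact: kos_deg_untwist.
by rewrite untwist_chain Df linear0.
Qed.

Lemma twist_boundaries p f : boundaries z' p f -> boundaries z p (twist f).
Proof.
by move=> [g [dg ->]]; exists (twist g); rewrite twist_chain; split => //;
  exact: kos_deg_twist.
Qed.

Lemma untwist_boundaries p f : boundaries z p f -> boundaries z' p (untwist f).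
Proof.
by move=> [g [dg ->]]; exists (untwist g); rewrite untwist_chain; split => //;
  exact: kos_deg_untwist.
Qed.

Lemma kos_hdim_twist p d :
  kos_hdim M z' p d <-> kos_hdim M z p d.
Proof.
rewrite !kos_hdimE; split; apply: subquot_dim_iso.
- exact: twist_cycles.
- exact: twist_boundaries.
- exact: untwist_cycles.
- exact: untwist_boundaries.
- exact: twistK.
- exact: untwistK.
- exact: untwist_cycles.
- exact: untwist_boundaries.
- exact: twist_cycles.
- exact: twist_boundaries.
- exact: untwistK.
- exact: twistK.
Qed.

End Twisting.

Section SnocZero.
Variables (k : fieldType) (R : comAlgType k) (M : lmodType R) (m : nat).
Local Notation V0 := {ffun {set 'I_m} -> M}.
Local Notation V1 := {ffun {set 'I_m.+1} -> M}.
Local Notation wo := (widen_ord (leqnSn m)).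
Implicit Types (S : {set 'I_m}) (T : {set 'I_m.+1}).

Definition widen_set S : {set 'I_m.+1} := wo @: S.
Definition restrict_set T : {set 'I_m} := [set j | wo j \in T].

Lemma wo_inj : injective wo.
Proof. by move=> a b /(congr1 val) /= /val_inj. Qed.

Lemma wo_neq_max j : (wo j == ord_max) = false.
Proof. by apply/negbTE; rewrite -(inj_eq val_inj) /= neq_ltn ltn_ord. Qed.

Lemma ord_max_or_wo (t : 'I_m.+1) : t = ord_max \/ exists j, t = wo j.
Proof.
case: (ltnP t m) => h; first by right; exists (Ordinal h); apply: val_inj.
by left; apply: val_inj => /=; apply/eqP; rewrite eqn_leq h -ltnS ltn_ord.
Qed.

Lemma mem_widen_set S j : (wo j \in widen_set S) = (j \in S).
Proof. exact: mem_imset wo_inj. Qed.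

Lemma max_notin_widen_set S : ord_max \notin widen_set S.
Proof. by apply/imsetP => -[j _ /eqP]; rewrite eq_sym wo_neq_max. Qed.

Lemma widen_setK S : restrict_set (widen_set S) = S.
Proof. by apply/setP => j; rewrite inE mem_widen_set. Qed.

Lemma restrict_setU1max T : restrict_set (ord_max |: T) = restrict_set T.
Proof. by apply/setP => j; rewrite !inE wo_neq_max. Qed.

Lemma card_widen_set S : #|widen_set S| = #|S|.
Proof. exact: card_imset wo_inj. Qed.

Lemma widen_setU1 S j : widen_set (j |: S) = wo j |: widen_set S.
Proof. exact: imsetU1. Qed.

Lemma restrict_setK T : T =
  if ord_max \in T then ord_max |: widen_set (restrict_set T)
  else widen_set (restrict_set T).
Proof.
apply/setP => t; case: (ord_max_or_wo t) => [->|[j ->]].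
  by case: ifP => h; rewrite ?inE ?eqxx // (negbTE (max_notin_widen_set _)).
by case: ifP => _; rewrite ?inE ?wo_neq_max /= mem_widen_set inE.
Qed.

Lemma kos_sign_widen S j : kos_sign (widen_set S) (wo j) = kos_sign S j :> R.
Proof.
rewrite /kos_sign; congr (_ ^+ _); rewrite -card_widen_set; apply: eq_card => t.
rewrite !inE; case: (ord_max_or_wo t) => [->|[i ->]].
  by rewrite (negbTE (max_notin_widen_set _)) /= (negbTE (max_notin_widen_set _)).
by rewrite !mem_widen_set inE.
Qed.

Lemma kos_sign_max_widen S j :
  kos_sign (ord_max |: widen_set S) (wo j) = kos_sign S j :> R.
Proof.
rewrite -(kos_sign_widen S j) /kos_sign; congr (_ ^+ _); apply: eq_card => t.
rewrite !inE; case: eqP => [->|//] /=.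
by rewrite (negbTE (max_notin_widen_set _)) /=; apply/negbTE; rewrite -leqNgt ltnW.
Qed.

Lemma snoc_tuple_wo (X : Type) (y : 'I_m -> X) t j : snoc_tuple y t (wo j) = y j.
Proof.
rewrite /snoc_tuple /= (insubT (fun j => (j < m)%N) (ltn_ord j)) /=.
by congr y; apply: val_inj.
Qed.

Lemma snoc_tuple_max (X : Type) (y : 'I_m -> X) t : snoc_tuple y t ord_max = t.
Proof. by rewrite /snoc_tuple /= insubF // ltnn. Qed.

(* Kos((y,0),M) = Kos(y,M)[-1] (+) Kos(y,M): a chain splits into its part
   containing e_m and its part free of e_m. *)
Definition split_chain (f : V1) : V0 * V0 :=
  ([ffun S => f (ord_max |: widen_set S)], [ffun S => f (widen_set S)]).
Definition join_chain (g : V0 * V0) : V1 :=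
  [ffun T : {set 'I_m.+1} => if ord_max \in T then g.1 (restrict_set T) else g.2 (restrict_set T)].

Lemma split_chain_is_linear : linear split_chain.
Proof. by move=> a f g; congr pair; apply/ffunP => S; rewrite !ffunE. Qed.
HB.instance Definition _ :=
  GRing.isLinear.Build R V1 (V0 * V0)%type *:%R split_chain split_chain_is_linear.

Lemma join_chain_is_linear : linear join_chain.
Proof. by move=> a f g; apply/ffunP => T; rewrite !ffunE; case: ifP. Qed.
HB.instance Definition _ :=
  GRing.isLinear.Build R (V0 * V0)%type V1 *:%R join_chain join_chain_is_linear.

Lemma join_chainK : cancel join_chain split_chain.
Proof.
case=> g1 g2; congr pair; apply/ffunP => S; rewrite !ffunE.
  by rewrite setU11 restrict_setU1max widen_setK.
by rewrite (negbTE (max_notin_widen_set _)) widen_setK.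
Qed.

Lemma split_chainK : cancel split_chain join_chain.
Proof.
move=> f; apply/ffunP => T; rewrite ffunE.
by case: ifP => h; rewrite ffunE [in RHS](restrict_setK T) h.
Qed.

Lemma split_chain_D (y : 'I_m -> R) (f : V1) :
  split_chain (kos_D (snoc_tuple y 0) f) =
  (kos_D y (split_chain f).1, kos_D y (split_chain f).2).
Proof.
congr pair; apply/ffunP => S; rewrite !ffunE !kos_dE big_mkcond big_ord_recr /=.
  rewrite !inE eqxx /= addr0 [RHS]big_mkcond; apply: eq_bigr => j _ /=.
  rewrite !inE wo_neq_max mem_widen_set kos_sign_max_widen snoc_tuple_wo ffunE.
  by rewrite setUCA -widen_setU1.
rewrite (negbTE (max_notin_widen_set S)) /= snoc_tuple_max mulr0 scale0r addr0.
rewrite [RHS]big_mkcond; apply: eq_bigr => j _ /=.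
by rewrite mem_widen_set kos_sign_widen snoc_tuple_wo ffunE widen_setU1.
Qed.

Lemma join_chain_D (y : 'I_m -> R) (g : V0 * V0) :
  kos_D (snoc_tuple y 0) (join_chain g) = join_chain (kos_D y g.1, kos_D y g.2).
Proof. by rewrite -[LHS]split_chainK split_chain_D join_chainK. Qed.

Lemma kos_deg_split_chain (p : int) (f : V1) : kos_deg p f ->
  kos_deg (p - 1) (split_chain f).1 /\ kos_deg p (split_chain f).2.
Proof.
move=> df; split=> S hS; rewrite ffunE df // ?card_widen_set //.
rewrite cardsU1 (max_notin_widen_set S) card_widen_set /=.
by apply: contra hS => /eqP <-; rewrite PoszD; apply/eqP; ring.
Qed.

Lemma kos_deg_join_chain (p : int) (g : V0 * V0) :
  kos_deg (p - 1) g.1 -> kos_deg p g.2 -> kos_deg p (join_chain g).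
Proof.
move=> d1 d2 T hT; rewrite ffunE; move: hT; rewrite {1}(restrict_setK T).
case: ifP => _; last by rewrite card_widen_set; apply: d2.
rewrite cardsU1 (max_notin_widen_set _) card_widen_set => hT; apply: d1.
by apply: contra hT => /eqP h2; rewrite PoszD h2 /=; apply/eqP; ring.
Qed.

Lemma split_chain_cycles (y : 'I_m -> R) p (f : V1) :
  cycles (snoc_tuple y 0) p f ->
  prod_pred (cycles y (p - 1)) (cycles y p) (split_chain f).
Proof.
move=> [df Df]; have [d1 d2] := kos_deg_split_chain df.
have := split_chain_D y f; rewrite Df linear0 => -[D1 D2].
by split; split.
Qed.

Lemma split_chain_boundaries (y : 'I_m -> R) p (f : V1) :
  boundaries (snoc_tuple y 0) p f ->
  prod_pred (boundaries y (p - 1)) (boundaries y p) (split_chain f).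
Proof.
move=> [g [dg ->]]; have [d1 d2] := kos_deg_split_chain dg.
rewrite split_chain_D; split; [exists (split_chain g).1 | exists (split_chain g).2].
  by rewrite subrK; split => //; move: d1; rewrite addrK.
by [].
Qed.

Lemma join_chain_cycles (y : 'I_m -> R) p (g : V0 * V0) :
  prod_pred (cycles y (p - 1)) (cycles y p) g ->
  cycles (snoc_tuple y 0) p (join_chain g).
Proof.
case: g => g1 g2 [[d1 D1] [d2 D2]]; split; first exact: kos_deg_join_chain.
by rewrite join_chain_D /= D1 D2 -[(0, 0)]/(0 : V0 * V0) linear0.
Qed.

Lemma join_chain_boundaries (y : 'I_m -> R) p (g : V0 * V0) :
  prod_pred (boundaries y (p - 1)) (boundaries y p) g ->
  boundaries (snoc_tuple y 0) p (join_chain g).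
Proof.
case: g => g1 g2 [[e1 [d1 /= ->]] [e2 [d2 /= ->]]].
exists (join_chain (e1, e2)); rewrite join_chain_D; split => //.
by apply: kos_deg_join_chain; rewrite /= ?addrK //; move: d1; rewrite subrK.
Qed.

Lemma kos_hdim_snoc0 (y : 'I_m -> R) p d :
  kos_hdim M (snoc_tuple y 0) p d <->
  subquot_dim (prod_pred (cycles (M := M) y (p - 1)) (cycles (M := M) y p))
    (prod_pred (boundaries (M := M) y (p - 1)) (boundaries (M := M) y p)) d.
Proof.
rewrite kos_hdimE; split; apply: subquot_dim_iso.
- exact: split_chain_cycles.
- exact: split_chain_boundaries.
- exact: join_chain_cycles.
- exact: join_chain_boundaries.
- exact: split_chainK.
- exact: join_chainK.
- exact: join_chain_cycles.
- exact: join_chain_boundaries.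
- exact: split_chain_cycles.
- exact: split_chain_boundaries.
- exact: join_chainK.
- exact: split_chainK.
Qed.

End SnocZero.

Section Doubling.
Variables (k : fieldType) (R : comAlgType k) (M : lmodType R) (m : nat).

Definition kos_homology_doubled (y : 'I_m -> R) (w : 'I_m.+1 -> R) :=
  forall (p : int) (d : nat), kos_hdim M w p d <->
    exists d1 d2 : nat,
      [/\ kos_hdim M y (p - 1) d1, kos_hdim M y p d2 & d = (d1 + d2)%N].

Definition last_unit : 'I_m.+1 -> R := fun i => if i == ord_max then 1 else 0.

(* The tuple (y, r) with r in the ideal <y> has doubled homology: twisting
   by  r e_m  reduces it to (y, 0), whose Koszul complex splits. *)
Lemma kos_homology_doubled_snoc (y cy : 'I_m -> R) :
  kos_homology_doubled y
    (fun i => snoc_tuple y 0 i + (\sum_j cy j * y j) * last_unit i).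
Proof.
move=> p d.
have sum_z : \sum_j snoc_tuple cy 0 j * snoc_tuple y 0 j = \sum_j cy j * y j.
  rewrite big_ord_recr /= !snoc_tuple_max mulr0 addr0.
  by apply: eq_bigr => j _; rewrite !snoc_tuple_wo.
have sum_e : \sum_j snoc_tuple cy 0 j * last_unit j = 0.
  rewrite big_ord_recr /= snoc_tuple_max mul0r addr0 big1 // => j _.
  by rewrite /last_unit wo_neq_max mulr0.
rewrite (kos_hdim_twist _ sum_z sum_e) kos_hdim_snoc0; split.
  move=> /subquot_dim_prod_inv [||||d1 [d2 [h1 h2 ->]]];
    try exact: cycles_subspace; try exact: boundaries_subspace.
  by exists d1, d2; split=> //; apply/kos_hdimE.
move=> [d1 [d2 [h1 h2 ->]]].
by apply: subquot_dim_prod; try exact: cycles_subspace; apply/kos_hdimE.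
Qed.

Lemma kos_homology_doubled_exact y w :
  kos_homology_doubled y w -> kos_exact M y -> kos_exact M w.
Proof.
move=> dbl exact_y p; apply/kos_hdim0/dbl.
by exists 0%N, 0%N; split=> //; apply/kos_hdim0; exact: exact_y.
Qed.

Lemma alt_sum_consecutive (g : nat -> int) N :
  \sum_(p < N.+1) (-1) ^+ p.+1 * ((if p : nat is p'.+1 then g p' else 0) + g p)
  = (-1) ^+ N.+1 * g N.
Proof.
elim: N => [|N IH]; first by rewrite big_ord1 /= add0r.
by rewrite big_ord_recr /= IH !exprS; ring.
Qed.

(* If i(y) is defined then i(w) = 0: the Euler characteristic of a doubled
   homology telescopes to 0. *)
Lemma kos_homology_doubled_index y w :
  kos_homology_doubled y w -> (exists i, kos_index_is M y i) -> kos_index_is M w 0.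
Proof.
move=> dbl [_ [e [he _]]].
pose g p := if (p <= m)%N then e p else 0%N.
have hg p : kos_hdim M y p%:Z (g p).
  rewrite /g; case: leqP => hp; first exact: he.
  apply: kos_hdim_out_of_range => S; apply: contraTneq hp => -[<-].
  by rewrite -leqNgt -[m in X in (_ <= X)%N]card_ord max_card.
exists (fun p => ((if p : nat is p'.+1 then g p' else 0) + g p)%N); split.
  move=> p _; apply/dbl; exists (if p is p'.+1 then g p' else 0%N), (g p).
  split=> //; case: p => [|p]; last by rewrite -addn1 PoszD addrK.
  by apply: kos_hdim_out_of_range => S; rewrite sub0r.
have := alt_sum_consecutive (fun p => (g p)%:Z) m.+1.
rewrite /g ltnn mulr0 => telescope; symmetry; rewrite -[RHS]telescope.
apply: eq_bigr => p _.
by rewrite PoszD; case: (nat_of_ord p).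
Qed.

End Doubling.

Lemma mmap_sub_const (k : fieldType) (R : comAlgType k) n (x : 'I_n -> R)
    (q : {mpoly k[n]}) :
  exists cx : 'I_n -> R, mmap (in_alg R) x q = (q@_0%MM)%:A + \sum_i cx i * x i.
Proof.
elim/mpolyind: q => [|c mm q _ _ [cx IH]].
  exists (fun _ => 0); rewrite mmap0 mcoeff0 scale0r add0r big1 // => i _.
  by rewrite mul0r.
rewrite mmapD mmapZ mmapX IH mcoeffD mcoeffZ mcoeffX /= ?in_algE.
have [->|nz] := eqVneq mm 0%MM.
  by exists cx; rewrite mmap11 mulr1 in_algD addrA mulr1.
(* a non-constant monomial is divisible by some variable x_i *)
have [i mi] : exists i, mm i != 0%N.
  apply/existsP; apply: contraNT nz => /existsPn h; apply/eqP/mnmP => j.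
  by rewrite mnm0E; apply/eqP; move: (h j); rewrite negbK.
pose A := c%:A * (x i ^+ (mm i).-1 * \prod_(j < n | j != i) x j ^+ mm j).
exists (fun j => cx j + (if j == i then A else 0)).
rewrite mulr0 add0r addrCA; congr (_ + _).
under [RHS]eq_bigr do rewrite mulrDl.
rewrite big_split /= addrC; congr (_ + _).
rewrite (bigD1 i) //= eqxx big1 ?addr0 => [|j /negbTE ->]; last by rewrite mul0r.
have mi_pos : (0 < mm i)%N by rewrite lt0n.
rewrite /mmap1 (bigD1 i) //= /A -[in x i ^+ mm i](prednK mi_pos) exprS.
by ring.
Qed.

Lemma mmap_sub_const_ideal (k : fieldType) (R : comAlgType k) n m
    (x : 'I_n -> R) (y : 'I_m -> R) (q : {mpoly k[n]}) :
  (forall i : 'I_n, exists c : 'I_m -> {mpoly k[n]},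
     x i = \sum_(j < m) mmap (in_alg R) x (c j) * y j) ->
  exists cy : 'I_m -> R, mmap (in_alg R) x q - (q@_0%MM)%:A = \sum_j cy j * y j.
Proof.
move=> x_in_y; have [cx ->] := mmap_sub_const x q.
have [cxy def_x] := functional_choice _ x_in_y.
exists (fun j => \sum_i cx i * mmap (in_alg R) x (cxy i j)).
rewrite addrC addKr; under eq_bigr do rewrite def_x mulr_sumr.
rewrite exchange_big /=; apply: eq_bigr => j _; rewrite mulr_suml.
by apply: eq_bigr => i _; rewrite mulrA.
Qed.

Section Spectrum.
Variables (k : fieldType) (R : comAlgType k) (M : lmodType R) (m : nat).

Lemma kos_shift0 (y : 'I_m -> R) : kos_shift y (fun _ => 0) = y.
Proof. by apply: functional_extensionality => i; rewrite /kos_shift scale0r subr0. Qed.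

Lemma kos_shift_snoc (y : 'I_m -> R) t (lam : k) :
  kos_shift (snoc_tuple y t) (snoc_tuple (fun _ => 0) lam) =
  (fun i => snoc_tuple y 0 i + (t - lam%:A) * last_unit R i).
Proof.
apply: functional_extensionality => i; rewrite /kos_shift /last_unit.
case: (ord_max_or_wo i) => [->|[j ->]]; first by rewrite !snoc_tuple_max eqxx mulr1 add0r.
by rewrite !snoc_tuple_wo wo_neq_max mulr0 addr0 scale0r subr0.
Qed.

(* If r = sum_j cy_j y_j + u with u a nonzero scalar, Kos((y, r), M) is exact:
   the combination -cy.y + 1.r equals u. *)
Lemma kos_exact_snoc_unit (y cy : 'I_m -> R) (u : k) : u != 0 ->
  kos_exact M (fun i => snoc_tuple y 0 i + (\sum_j cy j * y j + u%:A) * last_unit R i).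
Proof.
move=> u0; apply: (kos_exact_unit (cc := snoc_tuple (fun j => - cy j) 1) u0).
rewrite big_ord_recr /= !snoc_tuple_max /last_unit eqxx mulr1 add0r mul1r.
under eq_bigr do rewrite !snoc_tuple_wo wo_neq_max mulr0 addr0 mulNr.
by rewrite sumrN addKr.
Qed.

End Spectrum.

Theorem proposition2p5 (k : fieldType) (R : comAlgType k) (M : lmodType R)
  (n m : nat) (x : 'I_n -> R) (y : 'I_m -> R)
  (hyR' : forall j : 'I_m, exists P : {mpoly k[n]}, y j = mmap (in_alg R) x P)
  (hyx : forall j : 'I_m, exists c : 'I_n -> {mpoly k[n]},
           y j = \sum_(i < n) mmap (in_alg R) x (c i) * x i)
  (hxy : forall i : 'I_n, exists c : 'I_m -> {mpoly k[n]},
           x i = \sum_(j < m) mmap (in_alg R) x (c j) * y j)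
  (q : {mpoly k[n]}) (lam : k) :
  let z : 'I_m.+1 -> R := snoc_tuple y (mmap (in_alg R) x q) in
  let b : 'I_m.+1 -> k := snoc_tuple (fun _ => 0) lam in
  in_taylor_spectrum M z b ->
  [/\ in_taylor_spectrum M y (fun _ => 0),
      lam = q@_0%MM,
      (forall (p : int) (d : nat),
         kos_hdim M (kos_shift z b) p d <->
         exists d1 d2 : nat,
           [/\ kos_hdim M y (p - 1) d1, kos_hdim M y p d2 & d = (d1 + d2)%N])
    & (exists i : int, kos_index_is M y i) -> kos_index_is M (kos_shift z b) 0].
Proof.
move=> z b z_b_in_spec.
(* q(x) - q(0) = sum_j cy_j y_j, hence z - b = (y, 0) + (cy.y + q(0) - lam) e_m *)
have [cy def_q] := mmap_sub_const_ideal q hxy.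
have shift_zb : kos_shift z b = (fun i => snoc_tuple y 0 i +
    (\sum_j cy j * y j + (q@_0%MM - lam)%:A) * last_unit R i).
  by rewrite kos_shift_snoc -def_q scalerBl addrA subrK.
have lam_q0 : lam = q@_0%MM.
  apply/eqP; apply: contraT => lam_neq; case: z_b_in_spec; rewrite shift_zb.
  by apply: kos_exact_snoc_unit; rewrite subr_eq0 eq_sym.
have doubled : kos_homology_doubled M y (kos_shift z b).
  rewrite shift_zb lam_q0 subrr scale0r addr0.
  exact: kos_homology_doubled_snoc.
split => //; last exact: kos_homology_doubled_index.
rewrite /in_taylor_spectrum kos_shift0; apply: contra_not z_b_in_spec.
exact: kos_homology_doubled_exact.
Qed.
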